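(* Let $\Bbbk$ be a field of characteristic zero, $\lambda\in\Bbbk^*$ and $a\in\Bbbk$. If $\lambda\neq\pm1$ and $a\neq0$, then the $\mathcal O$-module $\Omega(\lambda,a)$ is irreducible.
   Context: $\mathcal O$ is the Lie algebra with basis $\mathcal O_n$ ($n\ge1$) and bracket $[\mathcal O_n,\mathcal O_m]=(n-m)\mathcal O_{n+m}-(n+m)\mathcal O_{n-m}$, where $\mathcal O_0=0$ and $\mathcal O_{-k}=-\mathcal O_k$ (it is the span of $L_n-L_{-n}$, $n\ge1$, in the Witt algebra). $\Omega(\lambda,a)$ is $\Bbbk[X]$ with action $\mathcal O_n\cdot f(X)=\lambda^n(X+na)f(X+n)-\lambda^{-n}(X-na)f(X-n)$ for $n\ge1$. *)

From HB Require Import structures.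
From mathcomp Require Import all_boot all_order all_algebra.
Set Implicit Arguments. Unset Strict Implicit. Unset Printing Implicit Defensive.
Import GRing.Theory.
Local Open Scope ring_scope.

(* Action of the basis element O_n (n >= 1) on Omega(lambda, a) = K[X]:
   O_n . f(X) = lambda^n (X + n a) f(X + n) - lambda^{-n} (X - n a) f(X - n).
   Note: p \Po q is the composition p(q). *)
Definition Oact (K : fieldType) (l a : K) (n : nat) (f : {poly K}) : {poly K} :=
  l ^+ n *: (('X + (n%:R * a)%:P) * (f \Po ('X + (n%:R)%:P)))
  - l ^- n *: (('X - (n%:R * a)%:P) * (f \Po ('X - (n%:R)%:P))).

(* An O-submodule of Omega(lambda,a): a K-subspace stable under all O_n, n >= 1
   (these span O, so this is exactly stability under O). *)
Definition Omega_submodule (K : fieldType) (l a : K) (S : {poly K} -> Prop) : Prop :=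
  [/\ S 0,
      (forall f g, S f -> S g -> S (f + g)),
      (forall (c : K) f, S f -> S (c *: f)) &
      (forall (n : nat) f, (0 < n)%N -> S f -> S (Oact l a n f))].

Definition Omega_irreducible (K : fieldType) (l a : K) : Prop :=
  (exists f : {poly K}, f != 0) /\
  forall S : {poly K} -> Prop, Omega_submodule l a S ->
    (forall f, S f -> f = 0) \/ (forall f, S f).

From HB Require Import structures.
From mathcomp Require Import all_boot all_order all_algebra.
From mathcomp Require Import ring zify.
From Stdlib Require Import FunctionalExtensionality Classical.
Set Implicit Arguments. Unset Strict Implicit. Unset Printing Implicit Defensive.
Import GRing.Theory.
Local Open Scope ring_scope.

(* Let 0 != f \in S with size f = k, put m = l^-2 and P(t) = (X + t a) f(X + t), a
   polynomial in t of size at most k + 1 with t^k-coefficient a * lead_coef f. Then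
   l^-n O_n f = P(n) - m^n P(-n). On sequences, E - m (E the shift) acts on m^n u(n)
   as m^(n+1) (E - 1) u, and E - 1 is the finite difference Delta, which lowers the
   degree of polynomial sequences. Hence (E - m)^(k+1) kills m^n P(-n), and
   (E - 1)^k (E - m)^(k+1) sends the sequence above to the constant
   (1 - m)^(k+1) k! a lead_coef f, which is nonzero since char K = 0, a != 0 and
   l^2 != 1; so 1 \in S. Finally O_1 raises the degree by exactly one (the new leading
   coefficient is (l - l^-1) lead_coef g), so S contains polynomials of every degree
   and S = K[X]. *)

Section ForwardDifference.
Variable R : comNzRingType.
Implicit Types p q : {poly R}.

Definition fdiff p : {poly R} := p \Po ('X + 1) - p.

Lemma fdiffC c : fdiff c%:P = 0.
Proof. by rewrite /fdiff comp_polyC subrr. Qed.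

Lemma fdiff_MXaddC p c : fdiff (p * 'X + c%:P) = fdiff p * ('X + 1) + p.
Proof. rewrite /fdiff comp_poly_MXaddC; ring. Qed.

Lemma poly_MXaddC_drop p : p = drop_poly 1 p * 'X + (p`_0)%:P.
Proof.
rewrite -{1}(poly_take_drop 1 p) expr1 addrC; congr (_ + _).
by rewrite (size1_polyC (size_take_poly 1 p)) coef_take_poly.
Qed.

Lemma size_fdiff k p : (size p <= k.+1)%N -> (size (fdiff p) <= k)%N.
Proof.
elim: k p => [|k IH] p sp; first by rewrite (size1_polyC sp) fdiffC size_poly0.
have sq : (size (drop_poly 1 p) <= k.+1)%N by rewrite size_drop_poly; lia.
rewrite (poly_MXaddC_drop p) fdiff_MXaddC.
apply: leq_trans (size_polyD _ _) _; rewrite geq_max sq andbT.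
apply: leq_trans (size_polyMleq _ _) _; rewrite size_XaddC.
by have := IH _ sq; lia.
Qed.

Lemma coef_fdiff k p : (size p <= k.+2)%N -> (fdiff p)`_k = k.+1%:R * p`_k.+1.
Proof.
elim: k p => [|k IH] p sp; rewrite {1}(poly_MXaddC_drop p) fdiff_MXaddC.
  have sq : (size (drop_poly 1 p) <= 1)%N by rewrite size_drop_poly; lia.
  rewrite mulrDr mulr1 coefD (coefD (_ * 'X)) coefMX /= add0r coef_drop_poly.
  by rewrite nth_default ?add0r ?mul1r ?size_fdiff.
have sq : (size (drop_poly 1 p) <= k.+2)%N by rewrite size_drop_poly; lia.
have top : (fdiff (drop_poly 1 p))`_k.+1 = 0 by rewrite nth_default ?size_fdiff.
rewrite mulrDr mulr1 coefD (coefD (_ * 'X)) coefMX /= IH // top addr0.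
by rewrite !coef_drop_poly !addn1 [in RHS]mulrSr mulrDl mul1r.
Qed.

Lemma iter_fdiff_const k p : (size p <= k.+1)%N ->
  iter k fdiff p = (k`!%:R * p`_k)%:P.
Proof.
elim: k p => [|k IH] p sp; first by rewrite /= mul1r -(size1_polyC sp).
by rewrite iterSr IH ?size_fdiff // coef_fdiff // mulrA -natrM mulnC.
Qed.

Lemma iter_fdiff_eq0 k p : (size p <= k)%N -> iter k fdiff p = 0.
Proof.
case: k => [|k] sp; first by apply/eqP; rewrite -size_poly_eq0 -leqn0.
by rewrite iterS iter_fdiff_const ?fdiffC // ltnW.
Qed.
End ForwardDifference.
Arguments fdiff {R} p.

Lemma iter_commute (T : Type) (f g : T -> T) : (forall x, f (g x) = g (f x)) ->
  forall i j x, iter i f (iter j g x) = iter j g (iter i f x).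
Proof.
move=> fg; have fgj j x : f (iter j g x) = iter j g (f x).
  by elim: j x => [|j IH] x //=; rewrite fg IH.
by elim=> [|i IH] j x //=; rewrite IH fgj.
Qed.

Section TwistedDifference.
Variables (R : comNzRingType) (V : lmodType R).
Implicit Types (m : R) (u w : nat -> V).

Definition tdiff m u : nat -> V := fun n => u n.+1 - m *: u n.

Lemma tdiffC m m' u : tdiff m (tdiff m' u) = tdiff m' (tdiff m u).
Proof.
apply: functional_extensionality => n; rewrite /tdiff !scalerBr !scalerA mulrC.
by rewrite !opprB !addrA [LHS]addrAC [RHS]addrAC [in RHS](addrAC (u n.+2)).
Qed.

Lemma tdiffB m u w :
  tdiff m (fun n => u n - w n) = fun n => tdiff m u n - tdiff m w n.
Proof.
apply: functional_extensionality => n.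
by rewrite /tdiff scalerBr !opprD !opprK [LHS]addrACA.
Qed.

Lemma iter_tdiffB m j u w :
  iter j (tdiff m) (fun n => u n - w n) =
  fun n => iter j (tdiff m) u n - iter j (tdiff m) w n.
Proof. by elim: j => [|j IH] //=; rewrite IH tdiffB. Qed.

Lemma iter_tdiff_cst m j (c : V) :
  iter j (tdiff m) (fun=> c) = fun=> (1 - m) ^+ j *: c.
Proof.
elim: j => [|j IH] /=; first by apply: functional_extensionality => n; rewrite scale1r.
rewrite IH; apply: functional_extensionality => n.
by rewrite /tdiff scalerA -scalerBl -[X in X - _]mul1r -mulrBl exprS.
Qed.

Lemma iter_tdiff_geom m j w :
  iter j (tdiff m) (fun n => m ^+ n *: w n) =
  fun n => m ^+ (n + j) *: iter j (tdiff 1) w n.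
Proof.
elim: j => [|j IH] /=; first by apply: functional_extensionality => n; rewrite addn0.
rewrite IH; apply: functional_extensionality => n.
by rewrite /tdiff scale1r scalerBr scalerA -exprS addSn addnS.
Qed.
End TwistedDifference.

Lemma iter_tdiff1_horner (R : comNzRingType) (A : comAlgType R) j
    (p : {poly A}) :
  iter j (tdiff 1) (fun n => p.[n%:R]) = fun n => (iter j fdiff p).[n%:R].
Proof.
elim: j => [|j IH] //=; rewrite IH; apply: functional_extensionality => n.
rewrite /tdiff /fdiff scale1r hornerD hornerN horner_comp hornerD hornerX.
by rewrite hornerC natr1.
Qed.

Lemma iter_tdiff_exppoly (R : comNzRingType) (A : comAlgType R) (m : R) k
    (p q : {poly A}) : (size p <= k.+1)%N -> (size q <= k.+1)%N ->
  iter k (tdiff 1) (iter k.+1 (tdiff m) (fun n => p.[n%:R] - m ^+ n *: q.[n%:R])) =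
  fun=> (1 - m) ^+ k.+1 *: (k`!%:R * p`_k).
Proof.
move=> sp sq.
have -> : iter k.+1 (tdiff m) (fun n => p.[n%:R] - m ^+ n *: q.[n%:R]) =
          iter k.+1 (tdiff m) (fun n => p.[n%:R]).
  rewrite iter_tdiffB iter_tdiff_geom iter_tdiff1_horner iter_fdiff_eq0 //.
  by apply: functional_extensionality => n; rewrite horner0 scaler0 subr0.
rewrite iter_commute; last exact: tdiffC.
rewrite iter_tdiff1_horner iter_fdiff_const // -iter_tdiff_cst.
by congr iter; apply: functional_extensionality => n; rewrite hornerC.
Qed.

Definition subspace (R : nzRingType) (V : lmodType R) (S : V -> Prop) :=
  [/\ S 0, forall u v, S u -> S v -> S (u + v) & forall c u, S u -> S (c *: u)].

Section Subspace.
Variables (R : comNzRingType) (V : lmodType R) (S : V -> Prop).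
Hypothesis S_subspace : subspace S.

Lemma subspace0 : S 0. Proof. by case: S_subspace. Qed.

Lemma subspaceD u v : S u -> S v -> S (u + v).
Proof. by case: S_subspace => _ SD _; apply: SD. Qed.

Lemma subspaceZ c u : S u -> S (c *: u).
Proof. by case: S_subspace => _ _; apply. Qed.

Lemma subspaceB u v : S u -> S v -> S (u - v).
Proof. by move=> Su Sv; rewrite -scaleN1r; apply/subspaceD/subspaceZ. Qed.

Lemma subspace_iter_tdiff m j (u : nat -> V) :
  (forall n, S (u n)) -> forall n, S (iter j (tdiff m) u n).
Proof.
by move=> Su; elim: j => [|j IH] n //=; apply/subspaceB/subspaceZ.
Qed.
End Subspace.

Lemma subspace_poly_full (K : fieldType) (S : {poly K} -> Prop) : subspace S ->
  (forall k, exists2 g, S g & size g = k.+1) -> forall p, S p.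
Proof.
move=> S_sub S_sizes p; elim: {p}(size p) {-2}p (leqnn (size p)) => [|k IH] p sp.
  by move: sp; rewrite size_poly_leq0 => /eqP ->; apply: subspace0.
have [g Sg sg] := S_sizes k.
have lg0 : lead_coef g != 0 by rewrite lead_coef_eq0 -size_poly_gt0 sg.
rewrite -(subrK ((p`_k / lead_coef g) *: g) p).
apply: subspaceD => //; last exact: subspaceZ.
apply: IH; apply/leq_sizeP => i; rewrite leq_eqVlt => /predU1P [<- | ki].
  have gk : g`_k = lead_coef g by rewrite lead_coefE sg.
  by rewrite coefB coefZ gk mulfVK ?subrr.
have [pi gi] : p`_i = 0 /\ g`_i = 0 by rewrite !nth_default ?sg // (leq_trans sp ki).
by rewrite coefB coefZ pi gi mulr0 subr0.
Qed.

Lemma size_scaleB_eq_lead (R : idomainType) (c d : R) (p q : {poly R}) :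
  c != d -> size q = size p -> lead_coef q = lead_coef p ->
  size (c *: p - d *: q) = size p.
Proof.
move=> cd; have [-> sq _ | p0 sq lq] := eqVneq p 0.
  move/eqP: sq; rewrite size_poly0 size_poly_eq0 => /eqP ->.
  by rewrite !scaler0 subr0 size_poly0.
have top : (c *: p - d *: q)`_(size p).-1 = (c - d) * lead_coef p.
  by rewrite coefB !coefZ -lead_coefE -sq -lead_coefE lq mulrBl.
apply/eqP; rewrite eqn_leq -{2}[size p]prednK ?size_poly_gt0 // ltnNge.
rewrite (leq_trans (size_polyD _ _)) ?size_polyN ?geq_max ?size_scale_leq //=.
  apply/negP => /(nth_default 0)/eqP; rewrite top mulf_eq0 subr_eq0 lead_coef_eq0.
  by rewrite (negPf cd) (negPf p0).
by rewrite -sq size_scale_leq.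
Qed.

Lemma size_XaddC_mul_comp (R : idomainType) (g : {poly R}) (b c : R) : g != 0 ->
  size (('X + c%:P) * (g \Po ('X + b%:P))) = (size g).+1.
Proof.
move=> g0; have sg : size (g \Po ('X + b%:P)) = size g.
  by rewrite size_comp_poly2 ?size_XaddC.
have X0 : 'X + c%:P != 0 by rewrite -size_poly_eq0 size_XaddC.
have G0 : g \Po ('X + b%:P) != 0 by rewrite -size_poly_eq0 sg size_poly_eq0.
by rewrite size_mul // sg size_XaddC.
Qed.

Lemma lead_coef_XaddC_mul_comp (R : idomainType) (g : {poly R}) (b c : R) :
  lead_coef (('X + c%:P) * (g \Po ('X + b%:P))) = lead_coef g.
Proof.
rewrite lead_coefM lead_coefXaddC mul1r lead_coef_comp ?size_XaddC //.
by rewrite lead_coefXaddC expr1n mulr1.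
Qed.

Section OmegaModule.
Variables (K : fieldType) (l a : K).
Implicit Types (f g : {poly K}) (S : {poly K} -> Prop).

Lemma Oact0 f : Oact l a 0 f = 0.
Proof.
by rewrite /Oact !(mul0r, polyC0, addr0, subr0) comp_polyXr expr0 invr1 subrr.
Qed.

Lemma Omega_submodule_subspace S : Omega_submodule l a S -> subspace S.
Proof. by case. Qed.

Lemma Omega_submoduleO S n f : Omega_submodule l a S -> S f -> S (Oact l a n f).
Proof. by case=> S0 _ _ SO; case: n => [|n] Sf; [rewrite Oact0 | apply: SO]. Qed.

Lemma size_Oact n g : l ^+ n != l ^- n -> g != 0 ->
  size (Oact l a n g) = (size g).+1.
Proof.
move=> ln g0; rewrite /Oact -!polyCN size_scaleB_eq_lead ?size_XaddC_mul_comp //.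
by rewrite !lead_coef_XaddC_mul_comp.
Qed.

(* The polynomial (X + t a) f(X + t) in t over K[X]: the outer variable 'X is t,
   and 'Y (= 'X%:P) is the variable X of Omega(l, a). *)
Definition Opoly f : {poly {poly K}} := ((a%:P)%:P * 'X + 'Y) * poly_XaY f.

Lemma horner_Opoly f (c : K) :
  (Opoly f).[c%:P] = ('X + (c * a)%:P) * (f \Po ('X + c%:P)).
Proof.
rewrite /Opoly hornerM hornerMXaddC hornerC horner_poly_XaY -polyCM (mulrC a).
by rewrite [(c * a)%:P + _]addrC [c%:P + _]addrC.
Qed.

Lemma Oact_Opoly n f :
  Oact l a n f = l ^+ n *: (Opoly f).[n%:R] - l ^- n *: (Opoly f \Po - 'X).[n%:R].
Proof.
rewrite horner_comp hornerN hornerX -polyC_natr -polyCN !horner_Opoly.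
by rewrite mulNr !polyCN.
Qed.

Lemma size_Opoly f : (size (Opoly f) <= (size f).+1)%N.
Proof.
apply: leq_trans (size_polyMleq _ _) _; rewrite size_poly_XaY size_MXaddC.
case: ifP => _; first by rewrite add0n (leq_trans (leq_pred _)).
by rewrite addSn /= -add1n leq_add2r size_polyC_leq1.
Qed.

Lemma coef_Opoly_size f : (Opoly f)`_(size f) = (a * lead_coef f)%:P.
Proof.
have [-> | f0] := eqVneq f 0.
  by rewrite /Opoly poly_XaY0 mulr0 coef0 lead_coef0 mulr0.
have top : (poly_XaY f)`_(size f).-1 = (lead_coef f)%:P.
  by rewrite -lead_coef_poly_XaY lead_coefE size_poly_XaY.
have out : (poly_XaY f)`_(size f) = 0 by rewrite nth_default ?size_poly_XaY.
rewrite /Opoly mulrDl -mulrA coefD !coefCM coefXM size_poly_eq0 (negPf f0).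
by rewrite top out mulr0 addr0 polyCM.
Qed.
End OmegaModule.

Section Irreducibility.
Variables (K : fieldType) (l a : K) (S : {poly K} -> Prop).
Hypotheses (l0 : l != 0) (l2 : l ^+ 2 != 1) (S_sub : Omega_submodule l a S).

Lemma Oact_twist n f :
  l ^- n *: Oact l a n f =
  (Opoly a f).[n%:R] - (l ^+ 2)^-1 ^+ n *: (Opoly a f \Po - 'X).[n%:R].
Proof.
rewrite Oact_Opoly scalerBr !scalerA mulVf ?expf_neq0 // scale1r.
by rewrite -invfM -exprD exprVn -exprM addnn mul2n.
Qed.

Lemma Omega_submodule_one : [pchar K] =i pred0 -> a != 0 ->
  forall f : {poly K}, f != 0 -> S f -> S 1.
Proof.
move=> ch a0 f f0 Sf; have Ssub := Omega_submodule_subspace S_sub.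
set m := (l ^+ 2)^-1.
have Sh n : S ((Opoly a f).[n%:R] - m ^+ n *: (Opoly a f \Po - 'X).[n%:R]).
  by rewrite -Oact_twist; apply: (subspaceZ Ssub); apply: Omega_submoduleO.
have sp := size_Opoly a f.
have sq : (size (Opoly a f \Po - 'X) <= (size f).+1)%N.
  by rewrite size_comp_poly2 // size_polyN size_polyX.
have S_tdiff := subspace_iter_tdiff Ssub m (size f).+1 Sh.
have := subspace_iter_tdiff Ssub 1 (size f) S_tdiff 0.
rewrite iter_tdiff_exppoly // coef_Opoly_size -polyC_natr -polyCM scale_polyC.
set c := _ * _ => Sc.
have c0 : c != 0.
  rewrite !mulf_neq0 ?expf_neq0 ?lead_coef_eq0 //.
    by rewrite subr_eq0 eq_sym invr_eq1.
  by move/pcharf0P: ch => ->; rewrite -lt0n fact_gt0.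
by have := subspaceZ Ssub c^-1 Sc; rewrite scale_polyC mulVf // polyC1.
Qed.

Lemma Omega_submodule_full : S 1 -> forall p, S p.
Proof.
move=> S1; apply: subspace_poly_full (Omega_submodule_subspace S_sub) _ => k.
have ll : l ^+ 1 != l ^- 1.
  by apply: contra l2; rewrite !expr1 => /eqP ll; rewrite expr2 {2}ll mulfV.
exists (iter k (Oact l a 1) 1); first by elim: k => //= k IH; apply: Omega_submoduleO.
elim: k => [|k IH] /=; first by rewrite size_poly1.
by rewrite size_Oact ?IH // -size_poly_eq0 IH.
Qed.
End Irreducibility.

Theorem proposition3p19 (K : fieldType) (l a : K) :
  [pchar K] =i pred0 -> l != 0 -> l != 1 -> l != -1 -> a != 0 ->
  Omega_irreducible l a.
Proof.
move=> ch l0 l1 lm1 a0; split; first by exists 1; rewrite oner_neq0.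
have l2 : l ^+ 2 != 1 by rewrite sqrf_eq1 negb_or l1 lm1.
move=> S S_sub; have [[f [Sf f0]] | S0] := classic (exists f, S f /\ f != 0).
  right; apply: (Omega_submodule_full l0 l2 S_sub).
  exact: (Omega_submodule_one l0 l2 S_sub ch a0 f0).
by left=> f Sf; apply/eqP; apply: contra_notT S0 => f0; exists f.
Qed.
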